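(* Let $f:[0,1]\to\mathbb R$ satisfy $|f(x')-f(x'')|\le H|x'-x''|^{1/N}$, let $X^*$ be the set of global minimizers of $f$ on $[0,1]$, apply PLT indefinitely (stopping rule disregarded) with $p(l)\le Q<\infty$ for all $l>1$, and let $\{x^q\}$ be the trial sequence. Suppose that for every $x^*\in X^*$ the condition of Theorem 2 holds, i.e. there is an infinite set of iteration numbers $\{h\}=\{h(x^* )\}$ such that for all $l\in\{h\}$, with $j=j(l)$ the index of an interval $[x_{j-1},x_j]$ containing $x^*$, one has $4^{1-1/N}K_j^2\ge M_j^2$ and $r\mu_j\ge 2^{1-1/N}K_j+(4^{1-1/N}K_j^2-M_j^2)^{1/2}$, where $K_j=\max\{(z_{j-1}-f(x^* ))(x^*-x_{j-1})^{-1/N},(z_j-f(x^* ))(x_j-x^* )^{-1/N}\}$ and $M_j=|z_{j-1}-z_j|(x_j-x_{j-1})^{-1/N}$. Then the set of limit points of $\{x^q\}$ coincides with $X^*$.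
   Context: Algorithm PLT (parallel information algorithm with local tuning) for minimizing $f$ on $[0,1]$; parameters: integer $N\ge1$, reliability parameter $r>1$, small number $\xi>0$. A ''trial'' is an evaluation of $f$ at a point. Step 0: perform $q(1)>1$ initial trials at $x^1=0$, $x^2=1$ and some interior points $x^3,\dots,x^{q(1)}\in(0,1)$; set $l=1$. At iteration $l$, let $q=q(l)$ be the number of trials made so far. Step 1: order all trial points as $0=x_1<x_2<\dots<x_q=1$ and set $z_i=f(x_i)$. Step 2: for $2\le j\le q$ compute $\mu_j=\max\{\lambda_j,\gamma_j,\xi\}$, where $\lambda_j=\max\{|z_i-z_{i-1}|/(x_i-x_{i-1})^{1/N}: i\in I_j\}$ with $I_2=\{2,3\}$, $I_j=\{j-1,j,j+1\}$ for $3\le j\le q-1$, $I_q=\{q-1,q\}$; and $\gamma_j=\mu\,(x_j-x_{j-1})^{1/N}/(X^{\max})^{1/N}$ with $\mu=\max\{|z_i-z_{i-1}|/(x_i-x_{i-1})^{1/N}:2\le i\le q\}$ and $X^{\max}=\max\{x_i-x_{i-1}:2\le i\le q\}$. Step 3: for $2\le j\le q$ compute the characteristic $R(j)=r\mu_j(x_j-x_{j-1})^{1/N}+\frac{(z_j-z_{j-1})^2}{r\mu_j(x_j-x_{j-1})^{1/N}}-(z_j+z_{j-1})$. Step 4: choose $p=p(l+1)\le q(l)-1$ and distinct indices $t_1,\dots,t_p$ being the indices of the $p$ largest characteristics ($t_1=\arg\max\{R(i):1<i\le q\}$, $t_k=\arg\max\{R(i):1<i\le q,\ i\ne t_s, 1\le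 s\le k-1\}$); the new trial points are $x^{q+k}=\tfrac12(x_{t_k-1}+x_{t_k})-\frac{1}{2r}\left(\frac{|z_{t_k}-z_{t_k-1}|}{\mu_{t_k}}\right)^N\operatorname{sign}(z_{t_k}-z_{t_k-1})$, $1\le k\le p$. Step 5: evaluate $f$ at these $p$ points in parallel, set $q(l+1)=q(l)+p(l+1)$, $l\leftarrow l+1$, and return to Step 1. *)

From Stdlib Require Import Reals Lra Lia List.
Import ListNotations.
Open Scope R_scope.

(* N-th root of a nonnegative real, with the convention nroot N d = 0 for d <= 0. *)
Definition nroot (N : nat) (d : R) : R :=
  match Rle_dec d 0 with
  | left _ => 0
  | right _ => Rpower d (/ INR N)
  end.

Definition sgn (y : R) : R :=
  match Rlt_dec 0 y with
  | left _ => 1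
  | right _ => match Rlt_dec y 0 with left _ => -1 | right _ => 0 end
  end.

(* maximum of a list of nonnegative reals (all lists used below are nonempty
   lists of nonnegative numbers, so base value 0 is harmless) *)
Definition maxl (l : list R) : R := fold_right Rmax 0 l.

(* Quantities of Steps 2-4 at one iteration.  q = number of trials so far,
   s : nat -> R the ordered trial points s 1 < ... < s q, z_i = f (s i). *)
Section PLTStep.
Variables (N : nat) (r xi : R) (f : R -> R) (q : nat) (s : nat -> R).

Definition dx (i : nat) : R := s i - s (i - 1)%nat.

Definition slope (i : nat) : R :=
  Rabs (f (s i) - f (s (i - 1)%nat)) / nroot N (dx i).

(* I_j = {j-1, j, j+1} intersected with {2,...,q}; this is exactly
   I_2 = {2,3}, I_j = {j-1,j,j+1}, I_q = {q-1,q} of the paper when q >= 3 *)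
Definition lam (j : nat) : R :=
  maxl (map slope (filter (fun i => andb (2 <=? i)%nat (i <=? q)%nat)
                          [(j - 1)%nat; j; (j + 1)%nat])).

Definition mu_all : R := maxl (map slope (seq 2 (q - 1))).

Definition Xmax : R := maxl (map dx (seq 2 (q - 1))).

Definition gam (j : nat) : R := mu_all * nroot N (dx j) / nroot N Xmax.

Definition mu (j : nat) : R := Rmax (Rmax (lam j) (gam j)) xi.

Definition charR (j : nat) : R :=
  r * mu j * nroot N (dx j)
  + (f (s j) - f (s (j - 1)%nat)) ^ 2 / (r * mu j * nroot N (dx j))
  - (f (s j) + f (s (j - 1)%nat)).

Definition newpt (j : nat) : R :=
  (s (j - 1)%nat + s j) / 2
  - / (2 * r) * (Rabs (f (s j) - f (s (j - 1)%nat)) / mu j) ^ N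
    * sgn (f (s j) - f (s (j - 1)%nat)).

(* Step 4-5: q' = q(l+1) trials after the iteration; x the trial sequence. *)
Definition plt_step (x : nat -> R) (q' : nat) : Prop :=
  (1 <= q' - q <= q - 1)%nat /\
  exists t : nat -> nat,
    (forall k, (1 <= k <= q' - q)%nat ->
       (2 <= t k <= q)%nat /\
       (forall k', (1 <= k' < k)%nat -> t k' <> t k) /\
       (forall i, (2 <= i <= q)%nat ->
          (forall k', (1 <= k' < k)%nat -> t k' <> i) ->
          charR i <= charR (t k))) /\
    (forall k, (1 <= k <= q' - q)%nat -> x (q + k)%nat = newpt (t k)).

End PLTStep.

Definition ordered_trials (q : nat) (s : nat -> R) (x : nat -> R) : Prop :=
  (forall i, (1 <= i < q)%nat -> s i < s (S i)) /\
  (forall y, (exists i, (1 <= i <= q)%nat /\ s i = y) <->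
             (exists k, (1 <= k <= q)%nat /\ x k = y)).

(* A (complete, infinite) run of PLT with parameters N, r, xi on f:
   x k = k-th trial point (k >= 1), q l = q(l) (l >= 1),
   xs l = ordered trial points at iteration l. *)
Definition plt_run (N : nat) (r xi : R) (f : R -> R)
    (x : nat -> R) (q : nat -> nat) (xs : nat -> nat -> R) : Prop :=
  (1 < q 1%nat)%nat /\
  x 1%nat = 0 /\ x 2%nat = 1 /\
  (forall k, (3 <= k <= q 1%nat)%nat -> 0 < x k < 1) /\
  (forall l, (1 <= l)%nat -> ordered_trials (q l) (xs l) x) /\
  (forall l, (1 <= l)%nat -> plt_step N r xi f (q l) (xs l) x (q (S l))).

Definition holder (N : nat) (H : R) (f : R -> R) : Prop :=
  forall x1 x2, 0 <= x1 <= 1 -> 0 <= x2 <= 1 ->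
    Rabs (f x1 - f x2) <= H * nroot N (Rabs (x1 - x2)).

Definition global_min (f : R -> R) (y : R) : Prop :=
  0 <= y <= 1 /\ forall w, 0 <= w <= 1 -> f y <= f w.

Definition limit_point (x : nat -> R) (y : R) : Prop :=
  forall eps, 0 < eps -> forall n, exists k, (n <= k)%nat /\ Rabs (x k - y) < eps.

Definition Kj (N : nat) (f : R -> R) (s : nat -> R) (j : nat) (xst : R) : R :=
  Rmax ((f (s (j - 1)%nat) - f xst) / nroot N (xst - s (j - 1)%nat))
       ((f (s j) - f xst) / nroot N (s j - xst)).

Definition Mj (N : nat) (f : R -> R) (s : nat -> R) (j : nat) : R :=
  Rabs (f (s (j - 1)%nat) - f (s j)) / nroot N (s j - s (j - 1)%nat).

Definition thm2_cond (N : nat) (r xi : R) (f : R -> R) (q : nat) (s : nat -> R)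
    (xst : R) : Prop :=
  exists j, (2 <= j <= q)%nat /\ s (j - 1)%nat <= xst <= s j /\
    let K := Kj N f s j xst in
    let M := Mj N f s j in
    Rpower 4 (1 - / INR N) * K ^ 2 >= M ^ 2 /\
    r * mu N xi f q s j >=
      Rpower 2 (1 - / INR N) * K + sqrt (Rpower 4 (1 - / INR N) * K ^ 2 - M ^ 2).

From Stdlib Require Import Reals Lra Lia List ZArith Classical.
Import ListNotations.
Open Scope R_scope.

(* Every new trial lies inside the interval it splits, at distance at least
   (1 - 1/r)/2 times the interval length from both endpoints, and hence from all
   other trials; since [0,1] contains only finitely many points pairwise at least
   eta apart, only finitely many splits can involve intervals longer than any
   fixed length.

   A global minimizer m that were not a limit point would be isolated from the
   trials, so the intervals around m given by the Theorem 2 condition stay long.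
   That condition bounds their characteristic below by -2 f(m) + c r xi delta^(1/N),
   and by the Hoelder bound the interval split first at such an iteration is then
   long too: infinitely many well separated trials, a contradiction.

   Conversely, let y be a limit point with f(y) > f(m). Near y every short interval
   has characteristic about -2 f(y), whereas Q intervals ending at trials near m
   (a limit point by the first part) have characteristic at least about -2 f(m).
   As at most Q intervals are split per iteration, short intervals near y are never
   split, so again infinitely many trials near y would be well separated. *)

Lemma INR_ge_1 N : (1 <= N)%nat -> 1 <= INR N.
Proof. intros HN; exact (le_INR 1 N HN). Qed.

Lemma nroot_nonneg N d : 0 <= nroot N d.
Proof. unfold nroot, Rpower; destruct (Rle_dec d 0); [lra | left; apply exp_pos]. Qed.

Lemma nroot_pos N d : 0 < d -> 0 < nroot N d.
Proof. intros Hd; unfold nroot, Rpower; destruct (Rle_dec d 0); [lra | apply exp_pos]. Qed.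

Lemma nroot_nonpos N d : d <= 0 -> nroot N d = 0.
Proof. intros Hd; unfold nroot; destruct (Rle_dec d 0); lra. Qed.

Lemma pow_nroot N d : (1 <= N)%nat -> 0 <= d -> nroot N d ^ N = d.
Proof.
  intros HN Hd. unfold nroot; destruct (Rle_dec d 0).
  - replace d with 0 by lra. destruct N; [lia | simpl; ring].
  - rewrite <- Rpower_pow by (unfold Rpower; apply exp_pos).
    rewrite Rpower_mult, Rinv_l by (pose proof (INR_ge_1 N HN); lra).
    apply Rpower_1; lra.
Qed.

Lemma nroot_pow N t : (1 <= N)%nat -> 0 <= t -> nroot N (t ^ N) = t.
Proof.
  intros HN [Ht | <-].
  - unfold nroot. destruct (Rle_dec (t ^ N) 0) as [Hle | _].
    + pose proof (pow_lt t N Ht); lra.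
    + rewrite <- Rpower_pow, Rpower_mult, Rinv_r by (pose proof (INR_ge_1 N HN); lra).
      apply Rpower_1; lra.
  - apply nroot_nonpos. destruct N; [lia | simpl; lra].
Qed.

Lemma nroot_le N a b : (1 <= N)%nat -> 0 <= a <= b -> nroot N a <= nroot N b.
Proof.
  intros HN [[Ha | <-] Hab].
  - unfold nroot; destruct (Rle_dec a 0), (Rle_dec b 0); try lra.
    apply Rle_Rpower_l; [|lra].
    left; apply Rinv_0_lt_compat; pose proof (INR_ge_1 N HN); lra.
  - rewrite nroot_nonpos by lra. apply nroot_nonneg.
Qed.

Lemma nroot_1 d : 0 <= d -> nroot 1 d = d.
Proof. intros Hd. rewrite <- (nroot_pow 1 d) at 2 by (lia || lra). f_equal; simpl; ring. Qed.

Lemma In_le_maxl l a : In a l -> a <= maxl l.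
Proof.
  induction l as [|b l IH]; simpl; [tauto|].
  intros [-> | Ha]; [apply Rmax_l|]. eapply Rle_trans; [apply IH, Ha | apply Rmax_r].
Qed.

Lemma maxl_lub l B : 0 <= B -> (forall a, In a l -> a <= B) -> maxl l <= B.
Proof. induction l as [|b l IH]; simpl; intros HB Hl; [lra | apply Rmax_lub; auto]. Qed.

Lemma maxl_nonneg l : 0 <= maxl l.
Proof. induction l as [|b l IH]; simpl; [lra | eapply Rle_trans; [apply IH | apply Rmax_r]]. Qed.

Lemma two_abs_le_add_sq_div a D : 0 < a -> 2 * Rabs D <= a + D ^ 2 / a.
Proof.
  intros Ha. rewrite <- pow2_abs. apply Rmult_le_reg_r with a; [exact Ha|].
  replace ((a + Rabs D ^ 2 / a) * a) with (a ^ 2 + Rabs D ^ 2) by (field; lra).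
  pose proof (pow2_ge_0 (a - Rabs D)). nra.
Qed.

Lemma sq_div_le_abs a D : 0 < a -> Rabs D <= a -> D ^ 2 / a <= Rabs D.
Proof.
  intros Ha HD. rewrite <- pow2_abs. apply Rmult_le_reg_r with a; [exact Ha|].
  replace (Rabs D ^ 2 / a * a) with (Rabs D ^ 2) by (field; lra).
  pose proof (Rabs_pos D). nra.
Qed.

Lemma two_mul_le_add_sq_div a Dl L K M D : 0 < a -> 0 < D -> Rabs Dl = M * D ->
  L ^ 2 * K ^ 2 >= M ^ 2 -> (L * K + sqrt (L ^ 2 * K ^ 2 - M ^ 2)) * D <= a ->
  2 * (L * K * D) <= a + Dl ^ 2 / a.
Proof.
  intros Ha HD HDl HLM Hroot.
  set (S := sqrt (L ^ 2 * K ^ 2 - M ^ 2)) in Hroot.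
  assert (HS : 0 <= S) by apply sqrt_pos.
  assert (HS2 : S * S = L ^ 2 * K ^ 2 - M ^ 2) by (apply sqrt_sqrt; lra).
  assert (Hsq : (S * D) ^ 2 <= (a - L * K * D) ^ 2).
  { apply pow_incr. split; [nra | lra]. }
  rewrite <- pow2_abs, HDl. apply Rmult_le_reg_r with a; [exact Ha|].
  replace ((a + (M * D) ^ 2 / a) * a) with (a ^ 2 + (M * D) ^ 2) by (field; lra).
  nra.
Qed.

Definition margin (r : R) : R := (1 - / r) / 2.

Lemma margin_pos r : 1 < r -> 0 < margin r.
Proof.
  intros Hr. assert (/ r < 1) by (rewrite <- Rinv_1; apply Rinv_lt_contravar; lra).
  unfold margin; lra.
Qed.

Definition lamN (N : nat) : R := Rpower 2 (1 - / INR N).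

Lemma Rpower4_lamN N : Rpower 4 (1 - / INR N) = lamN N ^ 2.
Proof.
  unfold lamN. simpl. rewrite Rmult_1_r, Rpower_mult_distr by lra. f_equal; lra.
Qed.

Lemma lamN_1 : lamN 1 = 1.
Proof. unfold lamN. simpl. rewrite Rinv_1, Rminus_diag. apply Rpower_O; lra. Qed.

Lemma lamN_gt_1 N : (2 <= N)%nat -> 1 < lamN N.
Proof.
  intros HN. unfold lamN, Rpower. rewrite <- exp_0 at 1. apply exp_increasing.
  assert (H2 : 2 <= INR N) by exact (le_INR 2 N HN).
  assert (/ INR N < 1) by (rewrite <- Rinv_1; apply Rinv_lt_contravar; lra).
  pose proof ln_lt_2. apply Rmult_lt_0_compat; lra.
Qed.

(* Kj_sum_bound uses only u, v <= K D separately: for N >= 2 this keeps just the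
   part lamN N - 1 > 0 of the factor 2^(1-1/N); for N = 1 the distances from the
   minimizer to the two endpoints add up to the interval length. *)
Definition c0N (N : nat) : R := if Nat.eq_dec N 1 then 1 else lamN N - 1.

Lemma c0N_pos N : (1 <= N)%nat -> 0 < c0N N.
Proof.
  intros HN. unfold c0N. destruct (Nat.eq_dec N 1); [lra|].
  pose proof (lamN_gt_1 N ltac:(lia)); lra.
Qed.

Lemma Kj_sum_bound N a b y u v K : (1 <= N)%nat -> a <= y <= b -> 0 <= K ->
  u <= K * nroot N (y - a) -> v <= K * nroot N (b - y) ->
  (1 + c0N N) * (u + v) <= 2 * (lamN N * K * nroot N (b - a)).
Proof.
  intros HN [Hay Hyb] HK Hu Hv. unfold c0N. destruct (Nat.eq_dec N 1) as [-> | HN1].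
  - rewrite lamN_1. rewrite !nroot_1 in * by lra. lra.
  - pose proof (lamN_gt_1 N ltac:(lia)) as HL.
    assert (Hmono : forall t, 0 <= t <= b - a -> K * nroot N t <= K * nroot N (b - a)).
    { intros t Ht. apply Rmult_le_compat_l; [lra | apply nroot_le; [exact HN | lra]]. }
    pose proof (Hmono (y - a) ltac:(lra)). pose proof (Hmono (b - y) ltac:(lra)).
    replace (1 + (lamN N - 1)) with (lamN N) by ring. nra.
Qed.

Lemma div_nroot_bound N w d : 0 <= d -> 0 <= w -> (d = 0 -> w = 0) ->
  0 <= w / nroot N d /\ forall K, w / nroot N d <= K -> w <= K * nroot N d.
Proof.
  intros [Hd | <-] Hw Hw0.
  - pose proof (nroot_pos N d Hd).
    split; [apply Rmult_le_pos; [lra | left; apply Rinv_0_lt_compat; lra]|].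
    intros K HK. replace w with (w / nroot N d * nroot N d) at 1 by (field; lra).
    apply Rmult_le_compat_r; lra.
  - rewrite (Hw0 eq_refl), nroot_nonpos by lra. split; intros; lra.
Qed.

Lemma Kj_bounds N f s j y : s (j - 1)%nat <= y <= s j ->
  0 <= f (s (j - 1)%nat) - f y -> 0 <= f (s j) - f y ->
  0 <= Kj N f s j y /\
  f (s (j - 1)%nat) - f y <= Kj N f s j y * nroot N (y - s (j - 1)%nat) /\
  f (s j) - f y <= Kj N f s j y * nroot N (s j - y).
Proof.
  intros Hy Hu Hv. unfold Kj.
  destruct (div_nroot_bound N (f (s (j - 1)%nat) - f y) (y - s (j - 1)%nat))
    as [Hu0 Hu1]; [lra | exact Hu | intros E; replace y with (s (j - 1)%nat) by lra; ring |].
  destruct (div_nroot_bound N (f (s j) - f y) (s j - y))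
    as [Hv0 Hv1]; [lra | exact Hv | intros E; replace y with (s j) by lra; ring |].
  split; [eapply Rle_trans; [exact Hu0 | apply Rmax_l]|].
  split; [apply Hu1, Rmax_l | apply Hv1, Rmax_r].
Qed.

Section OrderedTrials.

Variables (q : nat) (s x : nat -> R).
Hypothesis Ho : ordered_trials q s x.

Lemma ordered_trials_lt i i' : (1 <= i)%nat -> (i < i')%nat -> (i' <= q)%nat -> s i < s i'.
Proof.
  destruct Ho as [Hs _]. intros Hi Hii'. induction Hii' as [|i' Hle IH]; intros Hq.
  - apply Hs; lia.
  - eapply Rlt_trans; [apply IH; lia | apply Hs; lia].
Qed.

Lemma ordered_trials_le i i' : (1 <= i)%nat -> (i <= i')%nat -> (i' <= q)%nat -> s i <= s i'.
Proof.
  intros H1 H2 H3. destruct (Nat.eq_dec i i') as [<- | Hne]; [lra|].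
  left; apply ordered_trials_lt; lia.
Qed.

Lemma dx_pos j : (2 <= j <= q)%nat -> 0 < dx s j.
Proof.
  intros Hj. unfold dx. pose proof (ordered_trials_lt (j - 1) j ltac:(lia) ltac:(lia) ltac:(lia)).
  lra.
Qed.

Lemma ordered_point_is_trial i : (1 <= i <= q)%nat -> exists k, (1 <= k <= q)%nat /\ x k = s i.
Proof. intros Hi. apply Ho. eauto. Qed.

Lemma trial_is_ordered_point k : (1 <= k <= q)%nat -> exists i, (1 <= i <= q)%nat /\ s i = x k.
Proof. intros Hk. apply Ho. eauto. Qed.

Lemma trial_outside_interval j k : (2 <= j <= q)%nat -> (1 <= k <= q)%nat ->
  x k <= s (j - 1)%nat \/ s j <= x k.
Proof.
  intros Hj Hk. destruct (trial_is_ordered_point k Hk) as [i [Hi <-]].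
  destruct (Nat.le_gt_cases i (j - 1)).
  - left; apply ordered_trials_le; lia.
  - right; apply ordered_trials_le; lia.
Qed.

Lemma dx_ge_isolated y d j : (2 <= j <= q)%nat -> s (j - 1)%nat <= y <= s j ->
  (forall k, x k <> y -> d <= Rabs (x k - y)) -> d <= dx s j.
Proof.
  intros Hj Hy Hiso. unfold dx.
  destruct (ordered_point_is_trial (j - 1) ltac:(lia)) as [k1 [_ E1]].
  destruct (ordered_point_is_trial j ltac:(lia)) as [k2 [_ E2]].
  pose proof (ordered_trials_lt (j - 1) j ltac:(lia) ltac:(lia) ltac:(lia)).
  destruct (Req_dec (s j) y) as [E | E].
  - assert (Hk1 := Hiso k1 ltac:(rewrite E1; lra)).
    rewrite E1, Rabs_left1 in Hk1 by lra. lra.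
  - assert (Hk2 := Hiso k2 ltac:(rewrite E2; lra)).
    rewrite E2, Rabs_right in Hk2 by lra. lra.
Qed.

End OrderedTrials.

Section Iteration.

Variables (N : nat) (r xi : R) (f : R -> R) (q : nat) (s x : nat -> R).
Hypotheses (Hr : 1 < r) (Hxi : 0 < xi) (Ho : ordered_trials q s x).

Lemma mu_ge_xi j : xi <= mu N xi f q s j.
Proof. apply Rmax_r. Qed.

Lemma slope_le_mu j : (2 <= j <= q)%nat -> slope N f s j <= mu N xi f q s j.
Proof.
  intros Hj. unfold mu. eapply Rle_trans; [|apply Rmax_l]. eapply Rle_trans; [|apply Rmax_l].
  apply In_le_maxl, in_map, filter_In. split; [simpl; auto|].
  apply andb_true_intro; split; apply Nat.leb_le; lia.
Qed.

Lemma abs_diff_le_mu j : (2 <= j <= q)%nat ->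
  Rabs (f (s j) - f (s (j - 1)%nat)) <= mu N xi f q s j * nroot N (dx s j).
Proof.
  intros Hj. pose proof (slope_le_mu j Hj) as Hm. unfold slope in Hm.
  pose proof (nroot_pos N _ (dx_pos _ _ _ Ho j Hj)) as HD.
  apply (Rmult_le_compat_r (nroot N (dx s j))) in Hm; [|lra].
  unfold Rdiv in Hm. rewrite Rmult_assoc, Rinv_l, Rmult_1_r in Hm; lra.
Qed.

Lemma charR_ge j : (2 <= j <= q)%nat -> -2 * f (s j) <= charR N r xi f q s j.
Proof.
  intros Hj. unfold charR.
  pose proof (nroot_pos N _ (dx_pos _ _ _ Ho j Hj)). pose proof (mu_ge_xi j).
  assert (Ha : 0 < r * mu N xi f q s j * nroot N (dx s j))
    by (apply Rmult_lt_0_compat; [nra | auto]).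
  pose proof (two_abs_le_add_sq_div _ (f (s j) - f (s (j - 1)%nat)) Ha).
  pose proof (Rle_abs (f (s (j - 1)%nat) - f (s j))) as HD.
  rewrite Rabs_minus_sym in HD. pose proof (Rabs_pos (f (s j) - f (s (j - 1)%nat))). lra.
Qed.

Hypothesis HN : (1 <= N)%nat.

(* The shift of newpt from the midpoint is at most dx / (2 r), since
   |z_j - z_(j-1)| / mu_j <= dx^(1/N). *)
Lemma newpt_bounds j : (2 <= j <= q)%nat ->
  s (j - 1)%nat + margin r * dx s j <= newpt N r xi f q s j <= s j - margin r * dx s j.
Proof.
  intros Hj. pose proof (dx_pos _ _ _ Ho j Hj) as Hd. pose proof (abs_diff_le_mu j Hj) as HA.
  pose proof (mu_ge_xi j) as Hm.
  set (m := mu N xi f q s j) in *. set (A := Rabs (f (s j) - f (s (j - 1)%nat))) in *.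
  set (d := dx s j) in *.
  assert (HP : 0 <= (A / m) ^ N <= d).
  { assert (0 <= A / m <= nroot N d).
    { split; [apply Rmult_le_pos; [apply Rabs_pos | left; apply Rinv_0_lt_compat; lra]|].
      apply Rmult_le_reg_r with m; [lra|]. unfold Rdiv; rewrite Rmult_assoc, Rinv_l by lra. lra. }
    split; [apply pow_le; lra|]. rewrite <- (pow_nroot N d) by (auto; lra).
    apply pow_incr; auto. }
  unfold newpt, margin. fold m A.
  assert (Hb : / (2 * r) * (A / m) ^ N <= d / (2 * r)).
  { unfold Rdiv. rewrite Rmult_comm. apply Rmult_le_compat_r; [|lra].
    left; apply Rinv_0_lt_compat; lra. }
  assert (Hb0 : 0 <= / (2 * r) * (A / m) ^ N)
    by (apply Rmult_le_pos; [left; apply Rinv_0_lt_compat|]; lra).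
  assert (E : d / (2 * r) = / r / 2 * d) by (field; lra).
  unfold d, dx in *. unfold sgn; destruct (Rlt_dec 0 _); [|destruct (Rlt_dec _ 0)]; lra.
Qed.

Lemma newpt_in_interval j : (2 <= j <= q)%nat ->
  s (j - 1)%nat < newpt N r xi f q s j < s j.
Proof.
  intros Hj. pose proof (newpt_bounds j Hj). pose proof (margin_pos r Hr).
  pose proof (dx_pos _ _ _ Ho j Hj). pose proof (Rmult_lt_0_compat (margin r) (dx s j)). lra.
Qed.

Lemma newpt_outside_interval j j' : (2 <= j <= q)%nat -> (2 <= j' <= q)%nat -> j <> j' ->
  newpt N r xi f q s j' <= s (j - 1)%nat \/ s j <= newpt N r xi f q s j'.
Proof.
  intros Hj Hj' Hne. pose proof (newpt_in_interval j' Hj').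
  destruct (Nat.lt_gt_cases j j') as [[Hlt | Hgt] _]; [exact Hne | |].
  - right. pose proof (ordered_trials_le _ _ _ Ho j (j' - 1) ltac:(lia) ltac:(lia) ltac:(lia)); lra.
  - left. pose proof (ordered_trials_le _ _ _ Ho j' (j - 1) ltac:(lia) ltac:(lia) ltac:(lia)); lra.
Qed.

Lemma thm2_charR_lower y j : (forall i, (1 <= i <= q)%nat -> 0 <= s i <= 1) ->
  global_min f y -> (2 <= j <= q)%nat -> s (j - 1)%nat <= y <= s j ->
  Rpower 4 (1 - / INR N) * Kj N f s j y ^ 2 >= Mj N f s j ^ 2 ->
  r * mu N xi f q s j >= Rpower 2 (1 - / INR N) * Kj N f s j y
      + sqrt (Rpower 4 (1 - / INR N) * Kj N f s j y ^ 2 - Mj N f s j ^ 2) ->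
  c0N N / (1 + c0N N) * (r * xi * nroot N (dx s j)) <= charR N r xi f q s j + 2 * f y.
Proof.
  intros Hs01 [_ Hmin] Hj Hy C1 C2.
  rewrite Rpower4_lamN in C1, C2. fold (lamN N) in C2.
  pose proof (Hmin _ (Hs01 (j - 1)%nat ltac:(lia))). pose proof (Hmin _ (Hs01 j ltac:(lia))).
  destruct (Kj_bounds N f s j y Hy) as [HK [Hu Hv]]; [lra | lra |].
  pose proof (Kj_sum_bound N _ _ _ _ _ _ HN Hy HK Hu Hv) as Hsum. fold (dx s j) in Hsum.
  pose proof (c0N_pos N HN) as Hc. pose proof (mu_ge_xi j) as Hm.
  set (D := nroot N (dx s j)) in *.
  assert (HD : 0 < D) by exact (nroot_pos N _ (dx_pos _ _ _ Ho j Hj)).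
  set (a := r * mu N xi f q s j * D).
  assert (Hapos : 0 < a) by (apply Rmult_lt_0_compat; [nra | exact HD]).
  set (g := a + (f (s j) - f (s (j - 1)%nat)) ^ 2 / a).
  assert (Ha : r * xi * D <= a) by (apply Rmult_le_compat_r; nra).
  assert (Hga : a <= g).
  { assert (0 <= (f (s j) - f (s (j - 1)%nat)) ^ 2 / a)
      by (apply Rmult_le_pos; [apply pow2_ge_0 | left; apply Rinv_0_lt_compat; exact Hapos]).
    unfold g; lra. }
  assert (Hg : 2 * (lamN N * Kj N f s j y * D) <= g).
  { apply (two_mul_le_add_sq_div _ _ _ _ (Mj N f s j)); [exact Hapos | exact HD | | exact C1 |].
    - unfold Mj, D, dx. rewrite Rabs_minus_sym. field.
      fold (dx s j). exact (Rgt_not_eq _ _ (nroot_pos N _ (dx_pos _ _ _ Ho j Hj))).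
    - unfold a. apply Rmult_le_compat_r; lra. }
  replace (charR N r xi f q s j + 2 * f y)
    with (g - ((f (s (j - 1)%nat) - f y) + (f (s j) - f y))) by (unfold charR, g, a, D; ring).
  apply Rmult_le_reg_r with (1 + c0N N); [lra|].
  replace (c0N N / (1 + c0N N) * (r * xi * D) * (1 + c0N N)) with (c0N N * (r * xi * D))
    by (field; lra).
  nra.
Qed.

Section Holder.

Variable H : R.
Hypotheses (HH : 0 <= H) (Hs01 : forall i, (1 <= i <= q)%nat -> 0 <= s i <= 1)
  (Hh : holder N H f).

Lemma abs_diff_le_holder j : (2 <= j <= q)%nat ->
  Rabs (f (s j) - f (s (j - 1)%nat)) <= H * nroot N (dx s j).
Proof.
  intros Hj. pose proof (dx_pos _ _ _ Ho j Hj) as Hd. unfold dx in *.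
  rewrite <- (Rabs_right (s j - s (j - 1)%nat)) by lra. apply Hh; apply Hs01; lia.
Qed.

Lemma slope_le_holder i : (2 <= i <= q)%nat -> slope N f s i <= H.
Proof.
  intros Hi. unfold slope. pose proof (nroot_pos N _ (dx_pos _ _ _ Ho i Hi)) as HD.
  apply Rmult_le_reg_r with (nroot N (dx s i)); [exact HD|].
  unfold Rdiv; rewrite Rmult_assoc, Rinv_l, Rmult_1_r by lra.
  exact (abs_diff_le_holder i Hi).
Qed.

Lemma mu_le_Rmax j : (2 <= j <= q)%nat -> mu N xi f q s j <= Rmax H xi.
Proof.
  intros Hj.
  assert (Hall : mu_all N f q s <= H).
  { apply maxl_lub; [exact HH|]. intros a Ha. apply in_map_iff in Ha.
    destruct Ha as [i [<- Hi]]. apply in_seq in Hi. apply slope_le_holder; lia. }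
  assert (Hlam : lam N f q s j <= H).
  { apply maxl_lub; [exact HH|]. intros a Ha. apply in_map_iff in Ha.
    destruct Ha as [i [<- Hi]]. apply filter_In in Hi. destruct Hi as [_ Hi].
    apply andb_prop in Hi. destruct Hi as [H2 H3]. apply Nat.leb_le in H2, H3.
    apply slope_le_holder; lia. }
  assert (Hgam : gam N f q s j <= H).
  { unfold gam. pose proof (dx_pos _ _ _ Ho j Hj) as Hd.
    assert (Hdx : dx s j <= Xmax q s) by (apply In_le_maxl, in_map, in_seq; lia).
    pose proof (nroot_pos N _ Hd).
    pose proof (nroot_le N _ _ HN (conj (Rlt_le _ _ Hd) Hdx)).
    pose proof (maxl_nonneg (map (slope N f s) (seq 2 (q - 1)))).
    apply Rmult_le_reg_r with (nroot N (Xmax q s)); [lra|].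
    unfold Rdiv; rewrite Rmult_assoc, Rinv_l, Rmult_1_r by lra.
    fold (mu_all N f q s) in *. nra. }
  pose proof (Rmax_l H xi). pose proof (Rmax_r H xi).
  unfold mu. apply Rmax_lub; [apply Rmax_lub|]; lra.
Qed.

Lemma charR_le j : (2 <= j <= q)%nat ->
  charR N r xi f q s j <= (r * Rmax H xi + H) * nroot N (dx s j) - f (s j) - f (s (j - 1)%nat).
Proof.
  intros Hj. unfold charR.
  pose proof (nroot_pos N _ (dx_pos _ _ _ Ho j Hj)) as HD.
  pose proof (mu_ge_xi j). pose proof (mu_le_Rmax j Hj).
  pose proof (abs_diff_le_mu j Hj). pose proof (abs_diff_le_holder j Hj).
  assert (Ha : 0 < r * mu N xi f q s j * nroot N (dx s j))
    by (apply Rmult_lt_0_compat; [nra | exact HD]).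
  assert (Habs : Rabs (f (s j) - f (s (j - 1)%nat)) <= r * mu N xi f q s j * nroot N (dx s j)).
  { assert (0 <= mu N xi f q s j * nroot N (dx s j)) by nra. nra. }
  pose proof (sq_div_le_abs _ _ Ha Habs).
  assert (r * mu N xi f q s j * nroot N (dx s j) <= r * Rmax H xi * nroot N (dx s j)).
  { apply Rmult_le_compat_r; [lra|]. apply Rmult_le_compat_l; lra. }
  lra.
Qed.

Lemma dx_ge_of_charR_ge m g j : (forall w, 0 <= w <= 1 -> m <= f w) -> 0 <= g ->
  (2 <= j <= q)%nat -> g - 2 * m <= charR N r xi f q s j ->
  (g / (r * Rmax H xi + H)) ^ N <= dx s j.
Proof.
  intros Hm Hg Hj HR. pose proof (charR_le j Hj).
  pose proof (Hm _ (Hs01 j ltac:(lia))). pose proof (Hm _ (Hs01 (j - 1)%nat ltac:(lia))).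
  assert (HC : 0 < r * Rmax H xi + H) by (pose proof (Rmax_r H xi); nra).
  rewrite <- (pow_nroot N (dx s j)) by (auto; left; apply (dx_pos _ _ _ Ho), Hj).
  apply pow_incr. split; [apply Rmult_le_pos; [lra | left; apply Rinv_0_lt_compat; lra]|].
  apply Rmult_le_reg_r with (r * Rmax H xi + H); [exact HC|].
  unfold Rdiv; rewrite Rmult_assoc, Rinv_l, Rmult_1_r by lra. lra.
Qed.

Lemma charR_le_near y d j : 0 <= y <= 1 -> (2 <= j <= q)%nat -> dx s j <= d ->
  Rabs (s j - y) <= d -> Rabs (s (j - 1)%nat - y) <= d ->
  charR N r xi f q s j <= -2 * f y + (r * Rmax H xi + 3 * H) * nroot N d.
Proof.
  intros Hy Hj Hd Hj1 Hj0. pose proof (charR_le j Hj).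
  assert (Hend : forall e, 0 <= e <= 1 -> Rabs (e - y) <= d -> f y - H * nroot N d <= f e).
  { intros e He Hed. pose proof (Hh e y He Hy) as Hey.
    assert (H * nroot N (Rabs (e - y)) <= H * nroot N d)
      by (apply Rmult_le_compat_l, nroot_le;
          [exact HH | exact HN | split; [apply Rabs_pos | exact Hed]]).
    pose proof (Rle_abs (f y - f e)) as Hfy. rewrite Rabs_minus_sym in Hfy. lra. }
  pose proof (Hend _ (Hs01 j ltac:(lia)) Hj1).
  pose proof (Hend _ (Hs01 (j - 1)%nat ltac:(lia)) Hj0).
  pose proof (nroot_le N _ _ HN (conj (Rlt_le _ _ (dx_pos _ _ _ Ho j Hj)) Hd)).
  assert (0 <= r * Rmax H xi + H) by (pose proof (Rmax_r H xi); nra).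
  nra.
Qed.

End Holder.

End Iteration.

Definition grid_cell (eta v : R) : nat := Z.to_nat (up (v / eta)).

Lemma up_pos v : 0 <= v -> (0 < up v)%Z.
Proof. intros Hv. destruct (archimed v). apply lt_IZR. simpl. lra. Qed.

Lemma grid_cell_neq eta a b : 0 < eta -> 0 <= a -> 0 <= b -> eta <= Rabs (a - b) ->
  grid_cell eta a <> grid_cell eta b.
Proof.
  intros He Ha Hb Hab E. unfold grid_cell in E.
  assert (Ha' : 0 <= a / eta) by (apply Rmult_le_pos; [lra | left; apply Rinv_0_lt_compat; lra]).
  assert (Hb' : 0 <= b / eta) by (apply Rmult_le_pos; [lra | left; apply Rinv_0_lt_compat; lra]).
  pose proof (up_pos _ Ha'). pose proof (up_pos _ Hb').
  apply Z2Nat.inj in E; try lia.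
  destruct (archimed (a / eta)) as [A1 A2], (archimed (b / eta)) as [B1 B2].
  rewrite E in A1, A2.
  assert (Hlt : Rabs ((a - b) / eta) < 1).
  { replace ((a - b) / eta) with (a / eta - b / eta) by (field; lra). apply Rabs_def1; lra. }
  unfold Rdiv in Hlt. rewrite Rabs_mult, Rabs_inv, (Rabs_right eta) in Hlt by lra.
  apply Rmult_lt_compat_r with (r := eta) in Hlt; [|exact He].
  rewrite Rmult_assoc, Rinv_l, Rmult_1_l, Rmult_1_r in Hlt by lra. lra.
Qed.

Lemma grid_cell_le eta a : 0 < eta -> 0 <= a <= 1 -> (grid_cell eta a <= grid_cell eta 1)%nat.
Proof.
  intros He Ha. unfold grid_cell.
  assert (Ha' : 0 <= a / eta) by (apply Rmult_le_pos; [lra | left; apply Rinv_0_lt_compat; lra]).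
  assert (a / eta <= 1 / eta) by (apply Rmult_le_compat_r; [left; apply Rinv_0_lt_compat|]; lra).
  pose proof (up_pos _ Ha'). pose proof (up_pos (1 / eta) ltac:(lra)).
  destruct (archimed (a / eta)), (archimed (1 / eta)).
  assert (Hd : IZR (up (a / eta) - up (1 / eta)) < 1) by (rewrite minus_IZR; lra).
  apply lt_IZR in Hd. apply Z2Nat.inj_le; lia.
Qed.

(* Distinct points of [0,1] pairwise at distance >= eta fall into distinct
   cells of width eta, of which there are finitely many. *)
Lemma separated_points_finite (x : nat -> R) (P : nat -> Prop) eta : 0 < eta ->
  (forall n, exists k, (n <= k)%nat /\ P k) ->
  (forall k, P k -> (1 <= k)%nat /\ 0 <= x k <= 1 /\
     forall k', (1 <= k' < k)%nat -> eta <= Rabs (x k - x k')) -> False.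
Proof.
  intros He Hinf Hsep.
  assert (Hlist : forall m, exists ks, length ks = m /\
     NoDup (map (fun k => grid_cell eta (x k)) ks) /\ forall k, In k ks -> P k).
  { induction m as [|m [ks [Hl [Hnd Hp]]]].
    - exists []. split; [reflexivity|]. split; [constructor | intros k []].
    - destruct (Hinf (S (list_max ks))) as [k [Hk Pk]].
      exists (k :: ks). split; [simpl; lia|]. split; [|intros k0 [<- | Hk0]; auto].
      simpl. constructor; [|exact Hnd]. intros Hin.
      apply in_map_iff in Hin. destruct Hin as [k' [E Hk']].
      destruct (Hsep k' (Hp k' Hk')) as [H1' [H01' _]], (Hsep k Pk) as [_ [H01 Hs]].
      assert (Hmax : (k' <= list_max ks)%nat).
      { pose proof (proj1 (list_max_le ks (list_max ks)) (le_n _)) as F.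
        rewrite Forall_forall in F. exact (F k' Hk'). }
      apply (grid_cell_neq eta (x k) (x k')); try lra; [apply Hs; lia | exact (eq_sym E)]. }
  destruct (Hlist (S (S (grid_cell eta 1)))) as [ks [Hl [Hnd Hp]]].
  assert (Hincl : incl (map (fun k => grid_cell eta (x k)) ks) (seq 0 (S (grid_cell eta 1)))).
  { intros b Hb. apply in_map_iff in Hb. destruct Hb as [k [<- Hk]].
    destruct (Hsep k (Hp k Hk)) as [_ [H01 _]].
    apply in_seq. pose proof (grid_cell_le eta (x k) He H01). lia. }
  pose proof (NoDup_incl_length Hnd Hincl) as Hlen.
  rewrite length_map, length_seq in Hlen. lia.
Qed.

Lemma not_limit_point_isolated (x : nat -> R) y : ~ limit_point x y ->
  exists d, 0 < d /\ forall k, x k <> y -> d <= Rabs (x k - y).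
Proof.
  intros Hnl.
  assert (Htail : exists eps, 0 < eps /\ exists n, forall k, (n <= k)%nat -> eps <= Rabs (x k - y)).
  { apply NNPP; intros Hno; apply Hnl; intros eps He n.
    apply NNPP; intros Hk; apply Hno; exists eps; split; [exact He|]; exists n.
    intros k Hnk. apply Rnot_lt_le; intros Hlt. apply Hk; exists k; auto. }
  destruct Htail as [eps [He [n Hn]]].
  assert (Hhead : forall m, exists d, 0 < d /\
            forall k, (k < m)%nat -> x k <> y -> d <= Rabs (x k - y)).
  { induction m as [|m [d [Hd IH]]].
    - exists 1; split; [lra | intros; lia].
    - destruct (Req_dec (x m) y) as [E | E].
      + exists d; split; [exact Hd|]. intros k Hk Hne.
        destruct (Nat.eq_dec k m) as [-> | Hkm]; [contradiction | apply IH; [lia | exact Hne]].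
      + exists (Rmin d (Rabs (x m - y))).
        split; [apply Rmin_pos; [exact Hd | apply Rabs_pos_lt; lra]|].
        intros k Hk Hne. destruct (Nat.eq_dec k m) as [-> | Hkm]; [apply Rmin_r|].
        eapply Rle_trans; [apply Rmin_l | apply IH; [lia | exact Hne]]. }
  destruct (Hhead n) as [d [Hd Hd']]. exists (Rmin d eps). split; [apply Rmin_pos; lra|].
  intros k Hne. destruct (Nat.lt_ge_cases k n).
  - eapply Rle_trans; [apply Rmin_l | apply Hd'; auto].
  - eapply Rle_trans; [apply Rmin_r | apply Hn; auto].
Qed.

Lemma holder_le N H H' f : H <= H' -> holder N H f -> holder N H' f.
Proof.
  intros HH' Hh x1 x2 H1 H2. eapply Rle_trans; [apply Hh; auto|].
  apply Rmult_le_compat_r; [apply nroot_nonneg | exact HH'].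
Qed.

Definition clamp (v : R) : R := Rmax 0 (Rmin v 1).

Lemma clamp_in v : 0 <= clamp v <= 1.
Proof. unfold clamp, Rmax, Rmin; repeat destruct Rle_dec; lra. Qed.

Lemma clamp_id v : 0 <= v <= 1 -> clamp v = v.
Proof. intros; unfold clamp, Rmax, Rmin; repeat destruct Rle_dec; lra. Qed.

Lemma clamp_lipschitz a b : Rabs (clamp a - clamp b) <= Rabs (a - b).
Proof.
  unfold clamp, Rmax, Rmin; repeat destruct Rle_dec; unfold Rabs; repeat destruct Rcase_abs; lra.
Qed.

(* f o clamp is a continuous extension of f to R, to which the extreme value
   theorem of the standard library applies. *)
Lemma holder_has_global_min N H f : (1 <= N)%nat -> 0 < H -> holder N H f ->
  exists m, global_min f m.
Proof.
  intros HN HH Hh. set (g := fun v => f (clamp v)).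
  assert (Hc : forall c, continuity_pt g c).
  { intros c eps Heps. exists ((eps / (2 * H)) ^ N).
    split; [apply pow_lt, Rdiv_lt_0_compat; lra|].
    intros v [_ Hv]. simpl in *; unfold R_dist in *. unfold g.
    pose proof (Hh (clamp v) (clamp c) (clamp_in v) (clamp_in c)).
    pose proof (clamp_lipschitz v c).
    assert (nroot N (Rabs (clamp v - clamp c)) <= eps / (2 * H)).
    { rewrite <- (nroot_pow N (eps / (2 * H))) by (auto; left; apply Rdiv_lt_0_compat; lra).
      apply nroot_le; [exact HN | split; [apply Rabs_pos | lra]]. }
    assert (H * nroot N (Rabs (clamp v - clamp c)) <= H * (eps / (2 * H)))
      by (apply Rmult_le_compat_l; lra).
    replace (H * (eps / (2 * H))) with (eps / 2) in * by (field; lra). lra. }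
  destruct (continuity_ab_min g 0 1 ltac:(lra) (fun c _ => Hc c)) as [m [Hm Hm01]].
  exists m. split; [exact Hm01|]. intros w Hw. pose proof (Hm w Hw) as Hmw. unfold g in Hmw.
  rewrite !clamp_id in Hmw by auto. exact Hmw.
Qed.

Section Run.

Variables (N : nat) (r xi : R) (f : R -> R)
  (x : nat -> R) (q : nat -> nat) (xs : nat -> nat -> R).
Hypotheses (HN : (1 <= N)%nat) (Hr : 1 < r) (Hxi : 0 < xi)
  (Hrun : plt_run N r xi f x q xs).

Lemma run_ordered l : (1 <= l)%nat -> ordered_trials (q l) (xs l) x.
Proof. apply Hrun. Qed.

Lemma q_increasing l : (1 <= l)%nat -> (q l < q (S l))%nat.
Proof. intros Hl. destruct Hrun as (_ & _ & _ & _ & _ & Hs). destruct (Hs l Hl); lia. Qed.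

Lemma q_gt l : (1 <= l)%nat -> (l < q l)%nat.
Proof.
  intros Hl. induction Hl as [|l Hl IH]; [apply Hrun|].
  pose proof (q_increasing l Hl); lia.
Qed.

Lemma q_monotone l l' : (1 <= l)%nat -> (l <= l')%nat -> (q l <= q l')%nat.
Proof.
  intros Hl Hll'. induction Hll' as [|l' Hll' IH]; [lia|].
  pose proof (q_increasing l' ltac:(lia)); lia.
Qed.

Lemma iteration_of_trial L k : (1 <= L)%nat -> (q L < k)%nat ->
  exists l, (L <= l)%nat /\ (q l < k <= q (S l))%nat.
Proof.
  intros HL Hk.
  assert (Hbelow : forall l, (L <= l)%nat -> (k <= q l)%nat ->
            exists l', (L <= l' < l)%nat /\ (q l' < k <= q (S l'))%nat).
  { intros l Hl. induction Hl as [|l Hl IH]; intros Hkl; [lia|].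
    destruct (Nat.le_gt_cases k (q l)) as [Hle | Hgt].
    - destruct (IH Hle) as [l' ?]; exists l'; intuition lia.
    - exists l; split; lia. }
  pose proof (q_gt L HL). pose proof (q_gt k ltac:(lia)).
  destruct (Hbelow k ltac:(lia) ltac:(lia)) as [l' [? ?]]. exists l'; split; [lia | auto].
Qed.

(* T lists the intervals split before j in the same iteration. *)
Lemma new_trial_interval l k : (1 <= l)%nat -> (q l < k <= q (S l))%nat ->
  exists j, (2 <= j <= q l)%nat /\ x k = newpt N r xi f (q l) (xs l) j /\
    (forall k', (q l < k' < k)%nat ->
       exists j', (2 <= j' <= q l)%nat /\ j' <> j /\ x k' = newpt N r xi f (q l) (xs l) j') /\
    (exists T, length T = (k - q l - 1)%nat /\
       forall i, (2 <= i <= q l)%nat ->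
         charR N r xi f (q l) (xs l) j < charR N r xi f (q l) (xs l) i -> In i T).
Proof.
  intros Hl Hkl. destruct Hrun as (_ & _ & _ & _ & _ & Hstep).
  destruct (Hstep l Hl) as [_ [t [Ht Hx]]].
  set (kk := (k - q l)%nat).
  destruct (Ht kk ltac:(unfold kk; lia)) as [Htk [Hdis Hmax]].
  exists (t kk). split; [exact Htk|]. split.
  { rewrite <- (Hx kk ltac:(unfold kk; lia)). f_equal; unfold kk; lia. }
  split.
  - intros k' Hk'. exists (t (k' - q l)%nat).
    destruct (Ht (k' - q l)%nat ltac:(lia)) as [Htk' _].
    split; [exact Htk'|]. split.
    + intros E. apply (Hdis (k' - q l)%nat); [unfold kk; lia | exact E].
    + rewrite <- (Hx (k' - q l)%nat ltac:(lia)). f_equal; lia.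
  - exists (map t (seq 1 (kk - 1))).
    split; [rewrite length_map, length_seq; unfold kk; lia|].
    intros i Hi Hlt. apply in_map_iff. apply NNPP; intros Hno.
    apply (Rlt_not_le _ _ Hlt), Hmax; [exact Hi|].
    intros k' Hk' E. apply Hno. exists k'. split; [exact E | apply in_seq; lia].
Qed.

Lemma trials_in_unit_interval k : (1 <= k)%nat -> 0 <= x k <= 1.
Proof.
  induction k as [k IH] using (well_founded_induction Wf_nat.lt_wf). intros Hk.
  destruct (Nat.le_gt_cases k (q 1%nat)) as [Hinit | Hlate].
  - destruct Hrun as (_ & Hx1 & Hx2 & Hx3 & _).
    destruct (Nat.eq_dec k 1) as [-> | ]; [lra|]. destruct (Nat.eq_dec k 2) as [-> | ]; [lra|].
    pose proof (Hx3 k ltac:(lia)); lra.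
  - destruct (iteration_of_trial 1 k (le_n 1) Hlate) as [l [Hl Hkl]].
    destruct (new_trial_interval l k Hl Hkl) as [j [Hj [Hxk _]]].
    pose proof (run_ordered l Hl) as Ho.
    pose proof (newpt_in_interval N r xi f _ _ _ Hr Hxi Ho HN j Hj) as Hin. rewrite <- Hxk in Hin.
    destruct (ordered_point_is_trial _ _ _ Ho (j - 1) ltac:(lia)) as [k1 [Hk1 E1]].
    destruct (ordered_point_is_trial _ _ _ Ho j ltac:(lia)) as [k2 [Hk2 E2]].
    pose proof (IH k1 ltac:(lia) ltac:(lia)). pose proof (IH k2 ltac:(lia) ltac:(lia)).
    rewrite <- E1, <- E2 in Hin. lra.
Qed.

Lemma ordered_points_in_unit_interval l : (1 <= l)%nat ->
  forall i, (1 <= i <= q l)%nat -> 0 <= xs l i <= 1.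
Proof.
  intros Hl i Hi. destruct (ordered_point_is_trial _ _ _ (run_ordered l Hl) i Hi) as [k [Hk <-]].
  apply trials_in_unit_interval; lia.
Qed.

Lemma first_ordered_point l : (1 <= l)%nat -> xs l 1%nat = 0.
Proof.
  intros Hl. pose proof (run_ordered l Hl) as Ho.
  destruct (trial_is_ordered_point _ _ _ Ho 1%nat ltac:(pose proof (q_gt l Hl); lia)) as [i [Hi E]].
  destruct Hrun as (_ & Hx1 & _). rewrite Hx1 in E.
  pose proof (ordered_trials_le _ _ _ Ho 1 i ltac:(lia) ltac:(lia) ltac:(lia)).
  pose proof (ordered_points_in_unit_interval l Hl 1%nat ltac:(pose proof (q_gt l Hl); lia)). lra.
Qed.

(* Every other trial lies outside the interval j: earlier trials are ordered points,
   and the other new trials of the iteration lie in other intervals. *)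
Lemma new_trial_spec l k : (1 <= l)%nat -> (q l < k <= q (S l))%nat ->
  exists j, (2 <= j <= q l)%nat /\ xs l (j - 1)%nat < x k < xs l j /\
    (exists T, length T = (k - q l - 1)%nat /\
       forall i, (2 <= i <= q l)%nat ->
         charR N r xi f (q l) (xs l) j < charR N r xi f (q l) (xs l) i -> In i T) /\
    (forall k', (1 <= k' < k)%nat -> margin r * dx (xs l) j <= Rabs (x k - x k')).
Proof.
  intros Hl Hkl. pose proof (run_ordered l Hl) as Ho.
  destruct (new_trial_interval l k Hl Hkl) as [j [Hj [Hxk [Hsame HT]]]].
  exists j. split; [exact Hj|].
  split; [rewrite Hxk; exact (newpt_in_interval N r xi f _ _ _ Hr Hxi Ho HN j Hj)|].
  split; [exact HT|]. intros k' Hk'.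
  assert (Hout : x k' <= xs l (j - 1)%nat \/ xs l j <= x k').
  { destruct (Nat.le_gt_cases k' (q l)).
    - apply (trial_outside_interval _ _ _ Ho); lia.
    - destruct (Hsame k' ltac:(lia)) as [j' [Hj' [Hne ->]]].
      apply (newpt_outside_interval N r xi f _ _ _ Hr Hxi Ho HN); auto. }
  pose proof (newpt_bounds N r xi f _ _ _ Hr Hxi Ho HN j Hj) as Hb. rewrite <- Hxk in Hb.
  pose proof (Rmult_lt_0_compat _ _ (margin_pos r Hr) (dx_pos _ _ _ Ho j Hj)).
  unfold dx in *. destruct Hout; [rewrite Rabs_right | rewrite Rabs_left1]; lra.
Qed.

Lemma late_trial_fresh k : (q 1%nat < k)%nat ->
  0 < x k /\ forall k', (1 <= k' < k)%nat -> x k <> x k'.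
Proof.
  intros Hk. destruct (iteration_of_trial 1 k (le_n 1) Hk) as [l [Hl Hkl]].
  destruct (new_trial_spec l k Hl Hkl) as [j [Hj [Hin [_ Hfar]]]].
  pose proof (ordered_points_in_unit_interval l Hl (j - 1)%nat ltac:(lia)).
  split; [lra|]. intros k' Hk' E.
  pose proof (Hfar k' Hk') as Hd. rewrite E, Rminus_diag, Rabs_R0 in Hd.
  pose proof (Rmult_lt_0_compat _ _ (margin_pos r Hr) (dx_pos _ _ _ (run_ordered l Hl) j Hj)).
  lra.
Qed.

Lemma limit_point_in_unit_interval y : limit_point x y -> 0 <= y <= 1.
Proof.
  intros Hl. split; apply Rnot_lt_le; intros Hy.
  - destruct (Hl (- y) ltac:(lra) 1%nat) as [k [Hk Hxk]].
    pose proof (trials_in_unit_interval k Hk). unfold Rabs in Hxk; destruct Rcase_abs in Hxk; lra.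
  - destruct (Hl (y - 1) ltac:(lra) 1%nat) as [k [Hk Hxk]].
    pose proof (trials_in_unit_interval k Hk). unfold Rabs in Hxk; destruct Rcase_abs in Hxk; lra.
Qed.

(* A low trial w ends an interval whose characteristic is >= -2 f(w), which
   beats that of j; such intervals are split before j in the same iteration. *)
Lemma low_trials_le_earlier_splits l j T (W : list R) : (1 <= l)%nat ->
  (forall i, (2 <= i <= q l)%nat ->
     charR N r xi f (q l) (xs l) j < charR N r xi f (q l) (xs l) i -> In i T) ->
  NoDup W ->
  (forall w, In w W -> (exists k, (1 <= k <= q l)%nat /\ x k = w) /\ 0 < w /\
                       charR N r xi f (q l) (xs l) j < -2 * f w) ->
  (length W <= length T)%nat.
Proof.
  intros Hl HT HWnd HW. pose proof (run_ordered l Hl) as Ho.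
  assert (Hincl : incl W (map (xs l) T)).
  { intros w Hw. destruct (HW w Hw) as [[k [Hk <-]] [Hpos HR]].
    destruct (trial_is_ordered_point _ _ _ Ho k Hk) as [i [Hi Ei]].
    assert (Hi2 : (2 <= i)%nat).
    { destruct (Nat.eq_dec i 1) as [-> | ]; [|lia].
      rewrite first_ordered_point in Ei by exact Hl. lra. }
    apply in_map_iff. exists i. split; [exact Ei|]. apply HT; [lia|].
    pose proof (charR_ge N r xi f _ _ _ Hr Hxi Ho i ltac:(lia)). rewrite Ei in *. lra. }
  pose proof (NoDup_incl_length HWnd Hincl). rewrite length_map in *. lia.
Qed.

Lemma many_low_trials H xst m B : 0 <= H -> holder N H f -> 0 <= xst <= 1 ->
  limit_point x xst -> 0 < B ->
  exists W n, length W = m /\ NoDup W /\ forall w, In w W ->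
    (exists k, (1 <= k <= n)%nat /\ x k = w) /\ 0 < w /\ f w <= f xst + H * B.
Proof.
  intros HH Hh Hx01 Hlim HB. induction m as [|m [W [n [Hl [Hnd HW]]]]].
  - exists [], 0%nat. split; [reflexivity|]. split; [constructor | intros w []].
  - destruct (Hlim (B ^ N) (pow_lt _ _ HB) (S (Nat.max n (q 1%nat)))) as [k [Hk Hxk]].
    destruct (late_trial_fresh k ltac:(lia)) as [Hpos Hfresh].
    exists (x k :: W), k. split; [simpl; lia|]. split.
    + constructor; [|exact Hnd]. intros Hin. destruct (HW _ Hin) as [[k' [Hk' E]] _].
      exact (Hfresh k' ltac:(lia) (eq_sym E)).
    + intros w [<- | Hw].
      * split; [exists k; split; [lia | reflexivity]|]. split; [exact Hpos|].
        pose proof (Hh (x k) xst (trials_in_unit_interval k ltac:(lia)) Hx01).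
        assert (nroot N (Rabs (x k - xst)) <= B).
        { rewrite <- (nroot_pow N B) by (auto; lra).
          apply nroot_le; [exact HN | split; [apply Rabs_pos | lra]]. }
        assert (H * nroot N (Rabs (x k - xst)) <= H * B) by (apply Rmult_le_compat_l; lra).
        pose proof (Rle_abs (f (x k) - f xst)). lra.
      * destruct (HW w Hw) as [[k' [Hk' E]] Hrest].
        split; [exists k'; split; [lia | exact E] | exact Hrest].
Qed.

Lemma global_min_is_limit_point H y : 1 <= H -> holder N H f -> global_min f y ->
  (forall L, exists l, (L <= l)%nat /\ (1 <= l)%nat /\ thm2_cond N r xi f (q l) (xs l) y) ->
  limit_point x y.
Proof.
  intros HH Hh Hy Hcond. apply NNPP; intros Hnl.
  destruct (not_limit_point_isolated x y Hnl) as [d [Hd Hiso]].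
  pose proof (c0N_pos N HN) as Hc0. pose proof (nroot_pos N d Hd) as Hrd.
  set (g := c0N N / (1 + c0N N) * (r * xi * nroot N d)).
  assert (Hg : 0 < g).
  { apply Rmult_lt_0_compat; [apply Rdiv_lt_0_compat; lra|]. apply Rmult_lt_0_compat; [nra | lra]. }
  set (eta := margin r * (g / (r * Rmax H xi + H)) ^ N).
  assert (Heta : 0 < eta).
  { apply Rmult_lt_0_compat; [exact (margin_pos r Hr)|].
    apply pow_lt, Rdiv_lt_0_compat; [exact Hg|]. pose proof (Rmax_r H xi); nra. }
  apply (separated_points_finite x
    (fun k => exists h, (1 <= h)%nat /\ thm2_cond N r xi f (q h) (xs h) y /\ k = S (q h)) eta Heta).
  - intros n. destruct (Hcond n) as [h [Hnh [Hh1 Hc]]]. exists (S (q h)).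
    pose proof (q_gt h Hh1). split; [lia | exists h; auto].
  - intros k [h [Hh1 [Hc ->]]]. split; [lia|]. split; [apply trials_in_unit_interval; lia|].
    pose proof (run_ordered h Hh1) as Ho.
    pose proof (ordered_points_in_unit_interval h Hh1) as Hs01.
    destruct (new_trial_spec h (S (q h)) Hh1 ltac:(pose proof (q_increasing h Hh1); lia))
      as [j [Hj [_ [[T [HT HTcov]] Hfar]]]].
    intros k' Hk'. eapply Rle_trans; [|apply Hfar, Hk'].
    apply Rmult_le_compat_l; [left; exact (margin_pos r Hr)|].
    destruct Hc as [i [Hi [Hyi [C1 C2]]]].
    assert (HRi : g - 2 * f y <= charR N r xi f (q h) (xs h) i).
    { pose proof (thm2_charR_lower N r xi f _ _ _ Hr Hxi Ho HN y i Hs01 Hy Hi Hyi C1 C2).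
      pose proof (dx_ge_isolated _ _ _ Ho y d i Hi Hyi Hiso).
      assert (g <= c0N N / (1 + c0N N) * (r * xi * nroot N (dx (xs h) i))).
      { apply Rmult_le_compat_l; [left; apply Rdiv_lt_0_compat; lra|].
        apply Rmult_le_compat_l; [nra | apply nroot_le; [exact HN | lra]]. }
      lra. }
    (* the first new trial of iteration h splits an interval of maximal characteristic *)
    assert (Hij : charR N r xi f (q h) (xs h) i <= charR N r xi f (q h) (xs h) j).
    { apply Rnot_lt_le; intros Hlt. replace (S (q h) - q h - 1)%nat with 0%nat in HT by lia.
      destruct T as [|t T]; [exact (HTcov i Hi Hlt) | discriminate HT]. }
    apply (dx_ge_of_charR_ge N r xi f _ _ _ Hr Hxi Ho HN H ltac:(lra) Hs01 Hh (f y) g j);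
      [exact (proj2 Hy) | lra | exact Hj | lra].
Qed.

Lemma charR_le_short_near H y d l k j : 0 <= H -> holder N H f -> 0 <= y <= 1 ->
  (1 <= l)%nat -> (2 <= j <= q l)%nat -> xs l (j - 1)%nat < x k < xs l j ->
  dx (xs l) j < d -> Rabs (x k - y) < d ->
  charR N r xi f (q l) (xs l) j <= -2 * f y + (r * Rmax H xi + 3 * H) * nroot N (2 * d).
Proof.
  intros HH Hh Hy Hl Hj Hin Hshort Hky. apply Rabs_def2 in Hky. unfold dx in Hshort.
  apply (charR_le_near N r xi f _ _ _ Hr Hxi (run_ordered l Hl) HN H HH
           (ordered_points_in_unit_interval l Hl) Hh y (2 * d) j Hy Hj);
    [unfold dx | apply Rabs_le | apply Rabs_le]; lra.
Qed.

Lemma limit_point_is_global_min H Q y : 1 <= H -> holder N H f ->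
  (forall l, (1 <= l)%nat -> (q (S l) - q l <= Q)%nat) ->
  (forall xst, global_min f xst -> limit_point x xst) ->
  limit_point x y -> global_min f y.
Proof.
  intros HH Hh HQ Hmins Hly. pose proof (limit_point_in_unit_interval y Hly) as Hy01.
  destruct (holder_has_global_min N H f HN ltac:(lra) Hh) as [xst Hxst].
  split; [exact Hy01|]. intros z Hz.
  destruct (Rle_lt_dec (f y) (f xst)) as [Hle | Hgt]; [pose proof (proj2 Hxst z Hz); lra|].
  exfalso. set (Df := f y - f xst). assert (HDf : 0 < Df) by (unfold Df; lra).
  destruct (many_low_trials H xst Q (Df / (4 * H)) ltac:(lra) Hh (proj1 Hxst) (Hmins xst Hxst)
              ltac:(apply Rdiv_lt_0_compat; lra)) as [W [n0 [HWl [HWnd HW]]]].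
  set (C := r * Rmax H xi + 3 * H).
  assert (HC : 0 < C) by (pose proof (Rmax_r H xi); unfold C; nra).
  set (e := Df / (2 * C)). assert (He : 0 < e) by (apply Rdiv_lt_0_compat; lra).
  set (d := e ^ N / 2). assert (Hd : 0 < d) by (pose proof (pow_lt e N He); unfold d; lra).
  set (L0 := Nat.max n0 1). pose proof (q_gt L0 ltac:(lia)) as HL0.
  apply (separated_points_finite x (fun k => (q L0 < k)%nat /\ Rabs (x k - y) < d) (margin r * d));
    [exact (Rmult_lt_0_compat _ _ (margin_pos r Hr) Hd) | |].
  { intros n. destruct (Hly d Hd (Nat.max n (S (q L0)))) as [k [Hk Hxk]].
    exists k. split; [lia | split; [lia | exact Hxk]]. }
  intros k [HkL Hky].
  destruct (iteration_of_trial L0 k ltac:(lia) HkL) as [l [HlL Hkl]].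
  assert (Hl : (1 <= l)%nat) by lia. pose proof (q_monotone L0 l ltac:(lia) HlL).
  split; [lia|]. split; [apply trials_in_unit_interval; lia|].
  destruct (new_trial_spec l k Hl Hkl) as [j [Hj [Hin [[T [HT HTcov]] Hfar]]]].
  destruct (Rle_lt_dec d (dx (xs l) j)) as [Hlong | Hshort].
  { intros k' Hk'. eapply Rle_trans; [|apply Hfar, Hk'].
    apply Rmult_le_compat_l; [left; exact (margin_pos r Hr) | exact Hlong]. }
  exfalso.
  assert (HRj : charR N r xi f (q l) (xs l) j <= -2 * f y + Df / 2).
  { assert (Hroot : nroot N (2 * d) = e).
    { unfold d. replace (2 * (e ^ N / 2)) with (e ^ N) by field.
      apply nroot_pow; [exact HN | lra]. }
    pose proof (charR_le_short_near H y d l k j ltac:(lra) Hh Hy01 Hl Hj Hin Hshort Hky) as HR.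
    fold C in HR. rewrite Hroot in HR.
    replace (C * e) with (Df / 2) in HR by (unfold e; field; lra).
    exact HR. }
  assert (Hcount : (length W <= length T)%nat).
  { apply (low_trials_le_earlier_splits l j T W Hl HTcov HWnd).
    intros w Hw. destruct (HW w Hw) as [[kw [Hkw Ew]] [Hwpos Hwf]].
    replace (H * (Df / (4 * H))) with (Df / 4) in Hwf by (field; lra).
    split; [exists kw; split; [lia | exact Ew]|]. split; [exact Hwpos | unfold Df in *; lra]. }
  pose proof (HQ l Hl). lia.
Qed.

End Run.

Theorem corollary2 (N : nat) (r xi H : R) (Q : nat) (f : R -> R)
    (x : nat -> R) (q : nat -> nat) (xs : nat -> nat -> R) :
  (1 <= N)%nat -> 1 < r -> 0 < xi ->
  holder N H f ->
  plt_run N r xi f x q xs ->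
  (forall l, (1 <= l)%nat -> (q (S l) - q l <= Q)%nat) ->
  (forall xst, global_min f xst ->
     forall L, exists l, (L <= l)%nat /\ (1 <= l)%nat /\
       thm2_cond N r xi f (q l) (xs l) xst) ->
  forall y, limit_point x y <-> global_min f y.
Proof.
  intros HN Hr Hxi Hh Hrun HQ Hcond.
  pose proof (holder_le N H (Rmax H 1) f (Rmax_l H 1) Hh) as Hh1.
  assert (Hmins : forall xst, global_min f xst -> limit_point x xst).
  { intros xst Hxst.
    exact (global_min_is_limit_point N r xi f x q xs HN Hr Hxi Hrun (Rmax H 1) xst
             (Rmax_r H 1) Hh1 Hxst (Hcond xst Hxst)). }
  intros y. split; [|exact (Hmins y)].
  exact (limit_point_is_global_min N r xi f x q xs HN Hr Hxi Hrun (Rmax H 1) Q y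
           (Rmax_r H 1) Hh1 HQ Hmins).
Qed.
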